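(* Let $\Gamma_1,\Gamma_2$ be finite abelian groups with $|\Gamma_1|=2a+1$ and $|\Gamma_2|=2b+1$. Suppose that $2a+1$ divides $2b+1$ and that there exists a $\mathrm{M}^0_{\Gamma_2^*}(2,b;b,2)$. Then there exists a $\mathrm{M}^0_{\Gamma^*}(2,a+b+2ab;\,a+b+2ab,2)$, where $\Gamma=\Gamma_1\oplus\Gamma_2$.
   Context: For an abelian group $\Gamma$ and $\Omega\subseteq\Gamma$, a zero-sum magic partially filled array $\mathrm{M}^0_\Omega(m,n;s,k)$ is an $m\times n$ array, some cells of which may be empty, with entries in $\Omega$ in which every element of $\Omega$ appears exactly once, each row has exactly $s$ and each column exactly $k$ filled cells, and all row and column sums equal $0_\Gamma$. In particular $\mathrm{M}^0_\Omega(2,n;n,2)$ is a $2\times n$ array with no empty cells. $\Gamma^*=\Gamma\setminus\{0_\Gamma\}$. *)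

From HB Require Import structures.
From mathcomp Require Import all_boot all_order all_algebra.
Set Implicit Arguments. Unset Strict Implicit. Unset Printing Implicit Defensive.
Import GRing.Theory.
Local Open Scope ring_scope.

(* A (partially filled) m x n array over G: empty cells are [None]. *)
Definition filled (G : Type) (x : option G) : bool := if x is Some _ then true else false.

Definition is_zsmpfa (G : finZmodType) (Omega : {set G}) (m n s k : nat)
    (A : 'M[option G]_(m, n)) : Prop :=
  [/\ [/\ (forall i : 'I_m, #|[set j : 'I_n | filled (A i j)]| = s)%N,
      (forall j : 'I_n, #|[set i : 'I_m | filled (A i j)]| = k)%N,
      (forall i j x, A i j = Some x -> x \in Omega) &
      (forall x, x \in Omega -> #|[set ij : 'I_m * 'I_n | A ij.1 ij.2 == Some x]| = 1)%N],
      (forall i : 'I_m, \sum_(j < n) odflt 0 (A i j) = 0) &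
      (forall j : 'I_n, \sum_(i < m) odflt 0 (A i j) = 0)].

Arguments is_zsmpfa {G} Omega m n s k A.

Definition exists_zsmpfa (G : finZmodType) (Omega : {set G}) (m n s k : nat) : Prop :=
  exists A : 'M[option G]_(m, n), is_zsmpfa Omega m n s k A.

Definition nonzero (G : finZmodType) : {set G} := [set x : G | x != 0].

Definition dsum (G1 G2 : finZmodType) : Type := (G1 * G2)%type.
HB.instance Definition _ (G1 G2 : finZmodType) := Finite.on (dsum G1 G2).
HB.instance Definition _ (G1 G2 : finZmodType) := GRing.Zmodule.on (dsum G1 G2).

From HB Require Import structures.
From mathcomp Require Import all_boot all_order all_algebra fingroup cyclic ring zify.
Set Implicit Arguments. Unset Strict Implicit. Unset Printing Implicit Defensive.
Import GRing.Theory.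
Local Open Scope ring_scope.

(* An [M^0_{Γ*}(2,n;n,2)] amounts to [n] elements [f_i] of zero sum covering [Γ*]
   up to sign: its rows are [f] and [-f].  When [|Γ| = 2n+1], counting shows that
   the [±f_i] are then pairwise distinct, so that every element occurs exactly once.
   For [Γ = Γ1 ⊕ Γ2], take such a cover [h] of [Γ2*] and a half-set [T] of the odd
   group [Γ1*], and use the elements [(t, 0)] for [t ∈ T] together with, for every
   [j] and [g ∈ Γ1], the element [(g, h_j)] if [g] is the pivot [x_j] and [-(g, h_j)]
   otherwise.  They cover [Γ*] up to sign; their second coordinates add up to
   [(2 - |Γ1|) Σ h_j = 0] and their first ones to [2 Σ x_j + Σ T] (as [Σ Γ1 = 0]),
   which vanishes for a suitable pivot because 2 is invertible in [Γ1].  The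
   divisibility hypothesis only serves to rule out [b = 0 < a]. *)

Lemma mulrn_card (G : finZmodType) (x : G) : x *+ #|G| = 0.
Proof. by have := @expg_cardG _ (setT_group G) x (in_setT x); rewrite cardsT. Qed.

Section OddOrder.

Variables (G : finZmodType) (a : nat).
Hypothesis cardG : #|G| = (2 * a + 1)%N.

Lemma mulrn_half (x : G) : x *+ a.+1 *+ 2 = x.
Proof.
rewrite -mulrnA; have -> : (a.+1 * 2 = #|G| + 1)%N by rewrite cardG; lia.
by rewrite mulrnDr mulrn_card add0r.
Qed.

Lemma addrr_eq0 (x : G) : (x + x == 0) = (x == 0).
Proof.
apply/eqP/eqP => [x2_0|->]; last by rewrite addr0.
by rewrite -(mulrn_half x) mulrnAC mulr2n x2_0 mul0rn.
Qed.

Lemma eqNr_odd (x : G) : (- x == x) = (x == 0).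
Proof. by rewrite eq_sym -subr_eq0 opprK addrr_eq0. Qed.

Lemma sumr_odd_card : \sum_(g : G) g = 0.
Proof.
apply/eqP; rewrite -addrr_eq0; apply/eqP.
by rewrite {2}(reindex_inj (@oppr_inj G)) /= sumrN subrr.
Qed.

Lemma exists_half_set :
  exists T : {set G}, #|T| = a /\ forall g, g != 0 -> g \in T \/ - g \in T.
Proof.
pose T := [set g : G | (enum_rank g < enum_rank (- g))%N].
exists T; split; last first.
  move=> g; rewrite -eqNr_odd eq_sym -(inj_eq enum_rank_inj) neq_ltn !inE opprK.
  by case/orP; [left|right].
have compT : ~: T = 0 |: [set g | - g \in T].
  apply/setP => g; rewrite !inE opprK -leqNgt leq_eqVlt.
  by rewrite val_eqE (inj_eq enum_rank_inj) eqNr_odd.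
have := cardsC T; rewrite compT cardsU1 (card_preimset _ (@oppr_inj G)).
by rewrite inE oppr0 cardG; lia.
Qed.

End OddOrder.

Lemma cards_predT (T : finType) (P : pred T) :
  #|[set x | P x]| = #|T| <-> forall x, P x.
Proof.
rewrite -cardsT; split => [cardP x|PT]; last first.
  by rewrite (_ : [set x | P x] = setT) //; apply/setP => x; rewrite !inE PT.
have setPT : [set x | P x] = setT.
  by apply/eqP; rewrite eqEcard subsetT cardP leqnn.
by have := in_setT x; rewrite -setPT inE.
Qed.

Definition signv (V : zmodType) (s : bool) (v : V) : V := if s then v else - v.

Lemma sum_signv (T : finType) (V : zmodType) (x : T) (u : T -> V) :
  \sum_t signv (t == x) (u t) = u x *+ 2 - \sum_t u t.
Proof.
rewrite (bigD1 x) //= eqxx [X in _ - X](bigD1 x) //= opprD addrA mulr2n addrK.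
by congr (_ + _); rewrite -sumrN; apply: eq_bigr => t /negbTE ->.
Qed.

Lemma ord2_cases (r : 'I_2) : r = ord0 \/ r = ord_max.
Proof. by case: r => [[|[|//]] ?]; [left|right]; apply: val_inj. Qed.

Section SignCover.

Variables (G : finZmodType) (I : finType) (f : I -> G).

Definition sign_cover : Prop :=
  forall x : G, x != 0 -> exists i, x = f i \/ x = - f i.

Definition signed (p : I * bool) : G := signv p.2 (f p.1).

Hypotheses (f_cover : sign_cover) (cardG : #|G| = (2 * #|I|).+1).

(* [signed] maps onto the [2 * #|I|] nonzero elements, hence bijectively. *)
Lemma signed_inj : injective signed.
Proof.
have cover : nonzero G \subset codom signed.
  apply/subsetP => x; rewrite inE => /f_cover [i [->|->]].
  - exact: (codom_f signed (i, true)).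
  - exact: (codom_f signed (i, false)).
have card_nonzero : #|nonzero G| = #|{: I * bool}|.
  have -> : nonzero G = [set~ 0] by apply/setP => x; rewrite !inE.
  by rewrite cardsC1 cardG card_prod card_bool; lia.
have := subset_leq_card cover; rewrite card_nonzero => ge_codom.
have /image_injP inj : #|codom signed| == #|{: I * bool}|.
  by rewrite eqn_leq ge_codom leq_image_card.
by move=> p q; apply: inj.
Qed.

Lemma signed_neq0 p : signed p != 0.
Proof.
case: p => i s; suff nz_fi : f i != 0 by case: s; rewrite /signed /= ?oppr_eq0.
apply/eqP => fi0; suff /signed_inj [] : signed (i, true) = signed (i, false) by [].
by rewrite /signed /signv /= fi0 oppr0.
Qed.

Definition signed_rows : 'M[option G]_(2, #|I|) :=
  \matrix_(r, j) Some (signed (enum_val j, r == ord0)).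

Hypothesis f_sum : \sum_i f i = 0.

Lemma signed_rows_zsmpfa : is_zsmpfa (nonzero G) 2 #|I| #|I| 2 signed_rows.
Proof.
pose cell (rj : 'I_2 * 'I_#|I|) := (enum_val rj.2, rj.1 == ord0).
have cell_inj : injective cell.
  move=> [r j] [r' j'] [/enum_val_inj -> e]; congr (_, _).
  by case: (ord2_cases r) (ord2_cases r') e => -> [] ->.
have cell_onto p : exists q, cell q = p.
  exists (if p.2 then ord0 else ord_max, enum_rank p.1).
  by case: p => i []; rewrite /cell /= enum_rankK.
have row_sum s : \sum_(j < #|I|) signed (enum_val j, s) = 0.
  have := @reindex _ _ _ _ _ _ predT (fun i => signed (i, s))
    (onW_bij _ (@enum_val_bij I)).
  by move=> /= <-; case: s; rewrite /signed /= ?sumrN f_sum ?oppr0.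
split; first split.
- by move=> r; rewrite -[RHS]card_ord; apply/cards_predT => j; rewrite mxE.
- by move=> j; rewrite -[RHS](card_ord 2); apply/cards_predT => r; rewrite mxE.
- by move=> r j x; rewrite mxE => -[<-]; rewrite inE signed_neq0.
- move=> x; rewrite inE => /f_cover [i ex].
  have [p ->] : exists p, x = signed p.
    by case: ex => ->; [exists (i, true)|exists (i, false)].
  have [q <-] := cell_onto p.
  apply/eqP/cards1P; exists q; apply/setP => rj; rewrite !inE mxE.
  by rewrite (inj_eq (@Some_inj _)) (inj_eq signed_inj) (inj_eq cell_inj).
- by move=> r; under eq_bigr do rewrite mxE /=; apply: row_sum.
- by move=> j; rewrite !big_ord_recl big_ord0 !mxE /signed /= addr0 subrr.
Qed.

End SignCover.

Lemma zsmpfa_sign_cover (G : finZmodType) n (A : 'M[option G]_(2, n)) :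
  is_zsmpfa (nonzero G) 2 n n 2 A ->
  exists f : 'I_n -> G, \sum_j f j = 0 /\ sign_cover f.
Proof.
move=> [[_ col_card _ once] row_sum col_sum].
pose f j := odflt 0 (A ord0 j); exists f; split; first exact: row_sum ord0.
have cellE r j : A r j = Some (odflt 0 (A r j)).
  have := col_card j; rewrite -[RHS](card_ord 2) => /cards_predT/(_ r).
  by case: (A r j).
have row1 j : odflt 0 (A ord_max j) = - f j.
  have -> : ord_max = lift ord0 ord0 :> 'I_2 by apply: val_inj.
  have := col_sum j; rewrite big_ord_recl big_ord1 => col0.
  by rewrite -[LHS](addKr (f j)) col0 addr0.
move=> x nz_x; have x_in : x \in nonzero G by rewrite inE.
have /eqP/cards1P [[r j] occ] := once x x_in.
have : (r, j) \in [set ij | A ij.1 ij.2 == Some x] by rewrite occ set11.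
rewrite inE /= cellE => /eqP [<-]; exists j.
by case: (ord2_cases r) => ->; [left|right; rewrite row1].
Qed.

Lemma dsum_sumE (G1 G2 : finZmodType) (I : finType) (F : I -> dsum G1 G2) :
  \sum_i F i = (\sum_i (F i).1, \sum_i (F i).2).
Proof.
by rewrite -(raddf_sum (@fst G1 G2)) -(raddf_sum (@snd G1 G2)); case: (\sum_i F i).
Qed.

Section DirectSum.

Variables (G1 G2 : finZmodType) (a b : nat) (h : 'I_b -> G2) (T : {set G1}).
Hypotheses (cardG1 : #|G1| = (2 * a + 1)%N) (cardG2 : #|G2| = (2 * b + 1)%N).
Hypotheses (h_sum : \sum_j h j = 0) (h_cover : sign_cover h).
Hypotheses (cardT : #|T| = a) (T_cover : forall g, g != 0 -> g \in T \/ - g \in T).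
Hypothesis b0_a0 : b = 0%N -> a = 0%N.

Definition dsum_index : finType := ('I_b * G1 + {g : G1 | g \in T})%type.

Let tau : G1 := \sum_(t : {g : G1 | g \in T}) val t.

(* [a.+1] inverts 2 modulo [2a+1]. *)
Definition pivot (j : 'I_b) : G1 := if val j == 0%N then (- tau) *+ a.+1 else 0.

Definition dsum_elt (i : dsum_index) : dsum G1 G2 :=
  match i with
  | inl p => signv (p.2 == pivot p.1) ((p.2, h p.1) : dsum G1 G2)
  | inr t => (val t, 0)
  end.

Lemma card_dsum_index : #|dsum_index| = (a + b + 2 * a * b)%N.
Proof. by rewrite card_sum card_prod card_ord card_sig cardG1 cardT; ring. Qed.

Lemma card_dsum : #|{: dsum G1 G2}| = (2 * #|dsum_index|).+1.
Proof. by rewrite card_dsum_index card_prod cardG1 cardG2; ring. Qed.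

Lemma sum_pivots : (\sum_j pivot j) *+ 2 = - tau.
Proof.
case: (posnP b) => [b0 | b_gt0].
  have no_t : #|{: {g : G1 | g \in T}}| = 0%N by rewrite card_sig cardT b0_a0.
  have no_j : #|{: 'I_b}| = 0%N by rewrite card_ord.
  rewrite /tau !big_pred0 ?mul0rn ?oppr0 // => i.
  - exact: card0_eq no_t i.
  - exact: card0_eq no_j i.
rewrite (bigD1 (Ordinal b_gt0)) //= big1 ?addr0 => [|j]; last first.
  by rewrite /pivot -val_eqE /= => /negbTE ->.
exact: mulrn_half cardG1 (- tau).
Qed.

Lemma sum_dsum_elt : \sum_i dsum_elt i = 0.
Proof.
have signv_fst s g y : (signv s ((g, y) : dsum G1 G2)).1 = signv s g by case: s.
have signv_snd s g y : (signv s ((g, y) : dsum G1 G2)).2 = signv s y by case: s.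
rewrite dsum_sumE /dsum_index !big_sumType /=.
rewrite -(pair_bigA _ (fun j g => (signv (g == pivot j) ((g, h j) : dsum G1 G2)).1)).
rewrite -(pair_bigA _ (fun j g => (signv (g == pivot j) ((g, h j) : dsum G1 G2)).2)) /=.
rewrite [RHS](_ : _ = ((0 : G1), (0 : G2))) //; congr (_, _).
- under eq_bigr do under eq_bigr do rewrite signv_fst.
  under eq_bigr do rewrite sum_signv (sumr_odd_card cardG1) subr0.
  by rewrite sumrMnl sum_pivots addNr.
- under eq_bigr do under eq_bigr do rewrite signv_snd.
  under eq_bigr do rewrite sum_signv sumr_const.
  by rewrite big1_eq addr0 sumrB !sumrMnl h_sum !mul0rn subr0.
Qed.

Lemma dsum_elt_cover : sign_cover dsum_elt.
Proof.
have dsumN (g : G1) (y : G2) : - ((g, y) : dsum G1 G2) = (- g, - y) by [].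
have cover_fiber j g :
    exists i, ((g, h j) : dsum G1 G2) = dsum_elt i \/ (g, h j) = - dsum_elt i.
  by exists (inl (j, g)); rewrite /= /signv; case: (_ == _); [left|right; rewrite opprK].
move=> [g y] nz_gy; have [y0 | /h_cover [j [->|->]]] := eqVneq y 0.
- have nz_g : g != 0 by apply: contraNneq nz_gy => g0; rewrite g0 y0.
  case: (T_cover nz_g) => [g_in | Ng_in].
  + by exists (inr (exist _ g g_in)); left; rewrite y0.
  + by exists (inr (exist _ (- g) Ng_in)); right; rewrite /= dsumN opprK oppr0 y0.
- exact: cover_fiber.
- have [i [e|e]] := cover_fiber j (- g); exists i; [right|left].
  + by rewrite -e dsumN !opprK.
  + by rewrite -[RHS]opprK -e dsumN !opprK.
Qed.

End DirectSum.

Theorem mainTheorem16 (G1 G2 : finZmodType) (a b : nat) :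
  #|G1| = (2 * a + 1)%N ->
  #|G2| = (2 * b + 1)%N ->
  (2 * a + 1 %| 2 * b + 1)%N ->
  exists_zsmpfa (nonzero G2) 2 b b 2 ->
  exists_zsmpfa (nonzero (dsum G1 G2)) 2 (a + b + 2 * a * b) (a + b + 2 * a * b) 2.
Proof.
move=> cardG1 cardG2 dvd_ab [A /zsmpfa_sign_cover [h [h_sum h_cover]]].
have [T [cardT T_cover]] := exists_half_set cardG1.
have b0_a0 : b = 0%N -> a = 0%N by move=> b0; move: dvd_ab; rewrite b0 dvdn1; lia.
rewrite -(card_dsum_index b cardG1 cardT).
exists (signed_rows (dsum_elt a h (T := T))); apply: signed_rows_zsmpfa.
- exact: dsum_elt_cover.
- exact: (card_dsum cardG1 cardG2 cardT).
- exact: sum_dsum_elt.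
Qed.
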